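(* Let $A_1,\dots,A_n$ be unital algebras, $A=A_1\oplus\cdots\oplus A_n$, and $0\ne c=(c_1,\dots,c_n)\in A$. For each $i$ let $S_i\subseteq A_i$ be such that, whenever $c_i\ne0$, $c_i$ has a generalized factorization (inside $A_i$) through zero products in $S_i$. Regard each $A_i$ as a subalgebra of $A$. Then: (1) for each $i$, $c$ has a generalized factorization (inside $A$) through every pair $(x,y)$ with $x,y\in S_i$ and $xy=0$; (2) if $n\ge2$, $i\ne j$, $x\in S_i$, $y\in S_j$, and there exist a non-zero $z\in S_i$ with $xz=0$ and a non-zero $w\in S_j$ with $wy=0$, then either $c$ has a generalized factorization through $(x,y)$, or there exist $x',x''\in A_i$ and $y',y''\in A_j$ with $x=x'+x''$, $y=y'+y''$ such that $c$ factorizes through each of $(x',y')$, $(x',y'')$, $(x'',y')$, $(x'',y'')$.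
   Context: Let $B$ be an algebra, $c\in B$, and $x,y\in B$ with $xy=0$. $c$ factorizes through $(x,y)$ if there exist $a,b\in B$ with $ay=0$, $xb=0$ and $ab=c$. $c$ has a generalized factorization through $(x,y)$ if either (i) there exist $x',x''\in B$ with $x=x'+x''$ such that $c$ factorizes through both $(x',y)$ and $(x'',y)$, or (ii) there exist $y',y''\in B$ with $y=y'+y''$ such that $c$ factorizes through both $(x,y')$ and $(x,y'')$. For $S\subseteq B$, $c$ has a generalized factorization through zero products in $S$ if it has a generalized factorization through every $(x,y)$ with $x,y\in S$ and $xy=0$. *)

From HB Require Import structures.
From mathcomp Require Import all_boot all_order all_algebra.
Set Implicit Arguments. Unset Strict Implicit. Unset Printing Implicit Defensive.
Import GRing.Theory.
Local Open Scope ring_scope.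

(* Factorization notions, stated for an abstract carrier with an addition,
   a multiplication and a zero (so they apply both to a ring A_i and to the
   direct sum A = A_1 (+) ... (+) A_n with pointwise operations). *)
Section Factorization.
Variables (T : Type) (add mul : T -> T -> T) (zero : T).

Definition factorizes (c x y : T) : Prop :=
  exists a b, mul a y = zero /\ mul x b = zero /\ mul a b = c.

Definition gen_factorizes (c x y : T) : Prop :=
  (exists x' x'', x = add x' x'' /\ factorizes c x' y /\ factorizes c x'' y) \/
  (exists y' y'', y = add y' y'' /\ factorizes c x y' /\ factorizes c x y'').

Definition gen_factorizes_zp (c : T) (S : T -> Prop) : Prop :=
  forall x y, S x -> S y -> mul x y = zero -> gen_factorizes c x y.
End Factorization.

Definition rfactorizes (R : pzRingType) := @factorizes R *%R 0.
Definition rgen_factorizes (R : pzRingType) := @gen_factorizes R +%R *%R 0.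
Definition rgen_factorizes_zp (R : pzRingType) := @gen_factorizes_zp R +%R *%R 0.

Section DirectSum.
Variables (n : nat) (A : 'I_n -> pzRingType).

Definition dsum : Type := forall i : 'I_n, A i.
Definition dsum_add (u v : dsum) : dsum := fun i => u i + v i.
Definition dsum_mul (u v : dsum) : dsum := fun i => u i * v i.
Definition dsum_zero : dsum := fun i => 0.

Definition dsum_inj (i : 'I_n) (x : A i) : dsum :=
  fun j => match i =P j with
           | ReflectT e => ecast k (A k) e x
           | ReflectF _ => 0
           end.

Definition dfactorizes := @factorizes dsum dsum_mul dsum_zero.
Definition dgen_factorizes := @gen_factorizes dsum dsum_add dsum_mul dsum_zero.
End DirectSum.

From HB Require Import structures.
From mathcomp Require Import all_boot all_order all_algebra.
From Stdlib Require Import FunctionalExtensionality.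
Import GRing.Theory.
Local Open Scope ring_scope.

(* Factorizations of c in A are assembled componentwise.  Through a pair
   (x, y) lying in one summand A_i it suffices to factor c_i in A_i and to
   use c_l = c_l * 1 in the other summands.  For x in A_i and y in A_j with
   i != j the two conditions a y = 0 and x b = 0 decouple: one only needs c_i = a_i b_i with x b_i = 0 and c_j = a_j b_j
   with a_j y = 0.  A generalized factorization of c_i through (x, z) splits
   x into two summands with the first property, and one of c_j through
   (w, y) splits y into two summands with the second, giving all four
   factorizations. *)

Section RingFactorization.
Context {R : pzRingType}.

Definition rann_factorization (c x : R) := exists a b, x * b = 0 /\ a * b = c.
Definition lann_factorization (c y : R) := exists a b, a * y = 0 /\ a * b = c.

Lemma rgen_factorizes0 (x y : R) : rgen_factorizes 0 x y.
Proof.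
left; exists x, 0; rewrite addr0.
by split=> //; split; exists 0, 0; rewrite /= ?mul0r ?mulr0.
Qed.

Lemma rgen_factorizes_from_zp {c x y : R} {S : R -> Prop} :
  (c <> 0 -> rgen_factorizes_zp c S) -> S x -> S y -> x * y = 0 ->
  rgen_factorizes c x y.
Proof.
move=> zpS Sx Sy xy0; have [->|c0] := eqVneq c 0; first exact: rgen_factorizes0.
exact: zpS (elimN eqP c0) x y Sx Sy xy0.
Qed.

Lemma rann_factorization_zero (c : R) : rann_factorization c 0.
Proof. by exists c, 1; rewrite mul0r mulr1. Qed.

Lemma lann_factorization_zero (c : R) : lann_factorization c 0.
Proof. by exists c, 1; rewrite mulr0 mulr1. Qed.

Lemma rgen_factorizes_rann_split {c x z : R} :
  rgen_factorizes c x z ->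
  exists x' x'', x = x' + x'' /\ rann_factorization c x' /\ rann_factorization c x''.
Proof.
case=> [[x' [x'' [-> [[a [b [_ abc]]] [a' [b' [_ abc']]]]]]]|].
  by exists x', x''; split=> //; split; [exists a, b | exists a', b'].
case=> [z' [_ [_ [[a [b [_ xb0_abc]]] _]]]].
exists x, 0; rewrite addr0; split=> //; split; last exact: rann_factorization_zero.
by exists a, b.
Qed.

Lemma rgen_factorizes_lann_split {c w y : R} :
  rgen_factorizes c w y ->
  exists y' y'', y = y' + y'' /\ lann_factorization c y' /\ lann_factorization c y''.
Proof.
case=> [[w' [_ [_ [[a [b [ay0 [_ abc]]]] _]]]]|].
  exists y, 0; rewrite addr0; split=> //; split; last exact: lann_factorization_zero.
  by exists a, b.
case=> [y' [y'' [-> [[a [b [ay0 [_ abc]]]] [a' [b' [ay0' [_ abc']]]]]]]].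
by exists y', y''; split=> //; split; [exists a, b | exists a', b'].
Qed.

End RingFactorization.

Section DirectSumFactorization.
Variables (n : nat) (A : 'I_n -> pzRingType).

Definition dsum_set (f : dsum A) (i : 'I_n) (t : A i) : dsum A :=
  fun l => match i =P l with
           | ReflectT e => ecast k (A k) e t
           | ReflectF _ => f l
           end.

Definition dsum_one : dsum A := fun l => 1.

Lemma dsum_set_eq f i t : dsum_set f i t i = t.
Proof.
rewrite /dsum_set; case: (i =P i) => [e|//].
by rewrite (eq_irrelevance e erefl).
Qed.

Lemma dsum_set_neq f i t l : i != l -> dsum_set f i t l = f l.
Proof. by move=> il; rewrite /dsum_set; case: (i =P l) => [e|//]; rewrite e eqxx in il. Qed.

Lemma dsum_inj_eq i (x : A i) : dsum_inj x i = x.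
Proof. exact: (dsum_set_eq (dsum_zero A)). Qed.

Lemma dsum_inj_neq i (x : A i) l : i != l -> dsum_inj x l = 0.
Proof. exact: (dsum_set_neq (dsum_zero A)). Qed.

Lemma dsum_injD i (x y : A i) :
  dsum_inj (x + y) = dsum_add (dsum_inj x) (dsum_inj y).
Proof.
apply: functional_extensionality_dep => l; rewrite /dsum_add.
have [<-|il] := eqVneq i l; first by rewrite !dsum_inj_eq.
by rewrite !dsum_inj_neq // addr0.
Qed.

Lemma dfactorizes_inj (c : dsum A) i (x y : A i) :
  rfactorizes (c i) x y -> dfactorizes c (dsum_inj x) (dsum_inj y).
Proof.
case=> [a [b [ay0 [xb0 abc]]]].
exists (dsum_set c i a), (dsum_set dsum_one i b).
split; [|split]; apply: functional_extensionality_dep => l;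
  rewrite /dsum_mul /dsum_zero; have [<-|il] := eqVneq i l.
- by rewrite dsum_set_eq dsum_inj_eq.
- by rewrite dsum_inj_neq // mulr0.
- by rewrite dsum_set_eq dsum_inj_eq.
- by rewrite dsum_inj_neq // mul0r.
- by rewrite !dsum_set_eq.
- by rewrite !dsum_set_neq // mulr1.
Qed.

Lemma dgen_factorizes_inj (c : dsum A) i (x y : A i) :
  rgen_factorizes (c i) x y -> dgen_factorizes c (dsum_inj x) (dsum_inj y).
Proof.
case=> [[x' [x'' [-> [f' f'']]]]|[y' [y'' [-> [f' f'']]]]].
  left; exists (dsum_inj x'), (dsum_inj x''); rewrite dsum_injD.
  by split=> //; split; apply: dfactorizes_inj.
right; exists (dsum_inj y'), (dsum_inj y''); rewrite dsum_injD.
by split=> //; split; apply: dfactorizes_inj.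
Qed.

Lemma dfactorizes_inj_cross (c : dsum A) i j (x : A i) (y : A j) : i != j ->
  rann_factorization (c i) x -> lann_factorization (c j) y ->
  dfactorizes c (dsum_inj x) (dsum_inj y).
Proof.
move=> ij [ai [bi [xbi0 abi]]] [aj [bj [ajy0 abj]]].
have ji : j != i by rewrite eq_sym.
exists (dsum_set (dsum_set c j aj) i ai), (dsum_set (dsum_set dsum_one j bj) i bi).
split; [|split]; apply: functional_extensionality_dep => l;
  rewrite /dsum_mul /dsum_zero; have [<-|il] := eqVneq i l.
- by rewrite dsum_inj_neq // mulr0.
- have [<-|jl] := eqVneq j l; last by rewrite dsum_inj_neq // mulr0.
  by rewrite dsum_set_neq // dsum_set_eq dsum_inj_eq.
- by rewrite dsum_set_eq dsum_inj_eq.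
- by rewrite dsum_inj_neq // mul0r.
- by rewrite !dsum_set_eq.
- rewrite !(dsum_set_neq _ _ _ _ il); have [<-|jl] := eqVneq j l.
    by rewrite !dsum_set_eq.
  by rewrite !dsum_set_neq // mulr1.
Qed.

End DirectSumFactorization.

Theorem mainTheorem7 (n : nat) (A : 'I_n -> pzRingType)
  (c : dsum A) (S : forall i : 'I_n, A i -> Prop) :
  c <> dsum_zero A ->
  (forall i : 'I_n, c i <> 0 -> rgen_factorizes_zp (c i) (S i)) ->
  (* (1) *)
  (forall (i : 'I_n) (x y : A i), S i x -> S i y -> x * y = 0 ->
     dgen_factorizes c (dsum_inj x) (dsum_inj y)) /\
  (* (2) *)
  ((2 <= n)%N ->
  forall (i j : 'I_n) (x : A i) (y : A j), i != j -> S i x -> S j y ->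
    (exists z : A i, z <> 0 /\ S i z /\ x * z = 0) ->
    (exists w : A j, w <> 0 /\ S j w /\ w * y = 0) ->
    dgen_factorizes c (dsum_inj x) (dsum_inj y) \/
    (exists (x' x'' : A i) (y' y'' : A j),
       x = x' + x'' /\ y = y' + y'' /\
       dfactorizes c (dsum_inj x') (dsum_inj y') /\
       dfactorizes c (dsum_inj x') (dsum_inj y'') /\
       dfactorizes c (dsum_inj x'') (dsum_inj y') /\
       dfactorizes c (dsum_inj x'') (dsum_inj y''))).
Proof.
move=> _ zpS; split.
  move=> i x y Sx Sy xy0; apply: dgen_factorizes_inj.
  exact: rgen_factorizes_from_zp (zpS i) Sx Sy xy0.
move=> _ i j x y ij Sx Sy [z [_ [Sz xz0]]] [w [_ [Sw wy0]]]; right.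
have [x' [x'' [-> [fx' fx'']]]] := rgen_factorizes_rann_split
  (rgen_factorizes_from_zp (zpS i) Sx Sz xz0).
have [y' [y'' [-> [fy' fy'']]]] := rgen_factorizes_lann_split
  (rgen_factorizes_from_zp (zpS j) Sw Sy wy0).
by exists x', x'', y', y''; do !split=> //; exact: dfactorizes_inj_cross.
Qed.
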